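(* Let $X$ be a multiset of nonzero real numbers containing at least one positive and one negative number, and let $T$ be an addition tree over $X$. Let $y_1,\dots,y_{2k}$ be the critical leaves of $T$, indexed so that $y_{2i-1}$ and $y_{2i}$ are siblings, and let $z_1,\dots,z_{n-2k}$ be the noncritical leaves. Let $\Pi=\sum_{i=1}^k|y_{2i-1}+y_{2i}|$ and $\Delta=\sum_{j=1}^{n-2k}|z_j|$. Then $C(T)\ge(\Pi+\Delta)/2$.
   Context: An addition tree over a multiset $X=\{x_1,\dots,x_n\}$ is a full binary tree with $n$ leaves labeled by the elements of $X$ (each used once), each internal node having value equal to the sum of its children's values; $C(T)$ is the sum of the absolute values of the internal node values. A leaf is critical if its sibling is a leaf of the opposite sign (so critical leaves come in sibling pairs). *)

From mathcomp Require Import all_boot all_order all_algebra.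
Set Implicit Arguments. Unset Strict Implicit. Unset Printing Implicit Defensive.
Import Order.TTheory GRing.Theory Num.Theory.
Local Open Scope ring_scope.

Inductive atree (R : Type) : Type :=
| Leaf of R
| Node of atree R & atree R.
Arguments Leaf {R}.
Arguments Node {R}.

Section AdditionTree.
Variable R : realFieldType.

Fixpoint leaves (T : atree R) : seq R :=
  match T with Leaf x => [:: x] | Node l r => leaves l ++ leaves r end.

Fixpoint tval (T : atree R) : R :=
  match T with Leaf x => x | Node l r => tval l + tval r end.

Fixpoint cost (T : atree R) : R :=
  match T with Leaf _ => 0 | Node l r => `|tval l + tval r| + cost l + cost r end.

Definition opp_sign (a b : R) : bool := ((a < 0) && (0 < b)) || ((b < 0) && (0 < a)).

Fixpoint crit_pairs (T : atree R) : seq (R * R) :=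
  match T with
  | Leaf _ => [::]
  | Node (Leaf a) (Leaf b) => if opp_sign a b then [:: (a, b)] else [::]
  | Node l r => crit_pairs l ++ crit_pairs r
  end.

Fixpoint noncrit_leaves (T : atree R) : seq R :=
  match T with
  | Leaf x => [:: x]
  | Node (Leaf a) (Leaf b) => if opp_sign a b then [::] else [:: a; b]
  | Node l r => noncrit_leaves l ++ noncrit_leaves r
  end.

Definition Pi (T : atree R) : R := \sum_(p <- crit_pairs T) `|p.1 + p.2|.
Definition Delta (T : atree R) : R := \sum_(z <- noncrit_leaves T) `|z|.

End AdditionTree.

(* Every subtree satisfies Pi + Delta <= 2C + |value| if it is a leaf and
   Pi + Delta <= 2C - |value| otherwise. For two sibling leaves a, b we have
   Pi + Delta = |a + b|, since noncritical siblings have the same sign (or a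
   zero). At any other internal node with children values u, v the children
   contribute a slack +-|u| +-|v| with at most one plus sign, which is at most
   |u + v| by the triangle inequality; the node adds |u + v| to C, so 2C gains
   2|u + v| and the slack -|u + v| is restored. A tree with leaves of both
   signs is internal. *)

From Pilot Require Import Defs.
From mathcomp Require Import all_boot all_order all_algebra.
From mathcomp Require Import lra.
Set Implicit Arguments. Unset Strict Implicit. Unset Printing Implicit Defensive.
Import Order.TTheory GRing.Theory Num.Theory.
Local Open Scope ring_scope.

Section AdditionTreeCost.
Variable R : realFieldType.
Implicit Types (T l r : atree R) (a b : R).

Definition is_leaf T : bool := if T is Leaf _ then true else false.

Lemma normD_not_opp_sign a b : ~~ opp_sign a b -> `|a + b| = `|a| + `|b|.
Proof.
rewrite /opp_sign negb_or !negb_and -!leNgt.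
case/andP=> /orP[a_ge0 | b_le0] /orP[b_ge0 | a_le0].
- by rewrite !ger0_norm ?addr_ge0.
- by rewrite (@le_anti _ _ a 0) ?a_le0 // normr0 !add0r.
- by rewrite (@le_anti _ _ b 0) ?b_le0 // normr0 !addr0.
- by rewrite !ler0_norm ?opprD //; lra.
Qed.

Lemma Pi_Leaf a : Pi (Leaf a) = 0.
Proof. by rewrite /Pi big_nil. Qed.

Lemma Delta_Leaf a : Delta (Leaf a) = `|a|.
Proof. by rewrite /Delta big_seq1. Qed.

Lemma Pi_Delta_Node l r : ~~ (is_leaf l && is_leaf r) ->
  Pi (Node l r) + Delta (Node l r) = (Pi l + Delta l) + (Pi r + Delta r).
Proof.
move=> not_cherry; rewrite /Pi /Delta.
have -> : crit_pairs (Node l r) = crit_pairs l ++ crit_pairs r.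
  by case: l not_cherry => [?|? ?]; case: r => [?|? ?].
have -> : noncrit_leaves (Node l r) = noncrit_leaves l ++ noncrit_leaves r.
  by case: l not_cherry => [?|? ?]; case: r => [?|? ?].
by rewrite !big_cat /= addrACA.
Qed.

Lemma Pi_Delta_cherry a b :
  Pi (Node (Leaf a) (Leaf b)) + Delta (Node (Leaf a) (Leaf b)) = `|a + b|.
Proof.
rewrite /Pi /Delta /=; case: ifP => [_ | /negbT same_sign].
  by rewrite big_seq1 big_nil addr0.
by rewrite big_nil big_cons big_seq1 add0r normD_not_opp_sign.
Qed.

Lemma signed_normD_le (s t : bool) a b : ~~ (s && t) ->
  (if s then 1 else -1) * `|a| + (if t then 1 else -1) * `|b| <= `|a + b|.
Proof.
have := lerB_normD a b; have := lerB_normD b a; rewrite (addrC b a).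
have := normr_ge0 (a + b); have := normr_ge0 a; have := normr_ge0 b.
by case: s; case: t => //= *; lra.
Qed.

(* [Defs.tval] is qualified because [tval] alone denotes the tuple projection. *)
Lemma Pi_Delta_le_cost T :
  Pi T + Delta T <= 2 * cost T + (if is_leaf T then 1 else -1) * `|Defs.tval T|.
Proof.
elim: T => [a | l IHl r IHr]; first by rewrite Pi_Leaf Delta_Leaf /= mulr0 mul1r add0r.
have -> : cost (Node l r) = `|Defs.tval l + Defs.tval r| + cost l + cost r by [].
change (Defs.tval (Node l r)) with (Defs.tval l + Defs.tval r).
rewrite [is_leaf _]/= mulN1r.
have [/andP[] | not_cherry] := boolP (is_leaf l && is_leaf r).
  case: l {IHl} => [a|//] _; case: r {IHr} => [b|//] _.
  by rewrite Pi_Delta_cherry /= !addr0; lra.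
have children := signed_normD_le (Defs.tval l) (Defs.tval r) not_cherry.
rewrite Pi_Delta_Node //; move: IHl IHr children; lra.
Qed.

End AdditionTreeCost.

Theorem lemma3p1 (R : realFieldType) (T : atree R) :
  (forall x, x \in leaves T -> x != 0) ->
  (exists2 x, x \in leaves T & 0 < x) ->
  (exists2 x, x \in leaves T & x < 0) ->
  (Pi T + Delta T) / 2 <= cost T.
Proof.
(* The leaves need not be nonzero. *)
move=> _ [x x_in x_gt0] [y y_in y_lt0].
have T_internal : ~~ is_leaf T.
  case: T x_in y_in => [z|//] /=; rewrite !inE => /eqP ? /eqP ?; subst; lra.
have := Pi_Delta_le_cost T; rewrite (negbTE T_internal).
have := normr_ge0 (Defs.tval T); lra.
Qed.
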